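(* Let $[\alpha]_{A,C}\psi$ be a well-formed ac-box and let $\beta$ be a program such that $\alpha\parallel\beta$ is a program with recorder $h$, where $\beta$ does not interfere with $[\alpha\parallel\_\,]_{A,C}\psi$, i.e. for all $\chi\in\{A,C,\psi\}$: $FV(\chi)\cap BV(\beta)\subseteq\{\mu,\mu',h\}$ and $CN_{\{h\}}(\chi)\cap CN(\beta)\subseteq CN(\alpha)$. Let $(v,\tau\downarrow\alpha,w_\alpha)\in[\![\alpha]\!]$ and $(v,\tau\downarrow\beta,w_\beta)\in[\![\beta]\!]$ with $w=w_\alpha\bowtie w_\beta$, with $w=w_\alpha=w_\beta$ on $\{\mu,\mu'\}$ if $w\ne\bot$, and with $\tau\downarrow(\alpha\parallel\beta)=\tau$ (so $(v,\tau,w)\in[\![\alpha\parallel\beta]\!]$). Then for $\lambda\in\{A,C\}$: (1) $v\cdot(\tau\downarrow\alpha)\models\lambda$ iff $v\cdot\tau\models\lambda$; (2) if $w\ne\bot$, then $w_\alpha\cdot(\tau\downarrow\alpha)\models\psi$ iff $w\cdot\tau\models\psi$.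
   Context: Logic $\mathsf{dL}_{\mathsf{CHP}}$. Real variables (with differential variables $x'$), trace variables, channels $\mathbb N$; $\mu,\mu'$ are the global time variables. Terms: real terms $x\mid r\in\mathbb Q\mid e_1+e_2\mid e_1\cdot e_2\mid(p)'\mid\mathrm{ch}(te)\mid\mathrm{val}(te)\mid\mathrm{time}(te)\mid|te|$ and trace terms $h\mid\epsilon\mid\langle ch,p_1,p_2\rangle\mid te_1\cdot te_2\mid te\downarrow Y\mid te[e]$ ($p$ polynomials with rational coefficients, $Y$ finite or cofinite channel set). Programs: $x:=p\mid x:=*\mid ?\chi\mid x'=p\,\&\,\chi\mid\alpha;\beta\mid\alpha\cup\beta\mid\alpha^*\mid ch(h)!p\mid ch(h)?x\mid\alpha\parallel\beta$ with, in $\alpha\parallel\beta$, $BV(\alpha)\cap BV(\beta)\subseteq\{\mu,\mu'\}\cup\mathrm{TVar}$, and each program binding at most one trace variable, its recorder. Formulas: $e_1\sim e_2$, $\neg,\wedge,\forall$, $[\alpha]\psi$, $\langle\alpha\rangle\psi$, $[\alpha]_{A,C}\psi$, $\langle\alpha\rangle_{A,C}\psi$; the ac-box $[\alpha]_{A,C}\psi$ is well-formed if $FV(A,C)\cap(BV(\alpha)\cup\{\mu,\mu'\})$ contains only trace variables. Semantics. Traces are finite sequences of events $\langle ch,a,d\rangle\in\mathbb N\times\mathbb R\times\mathbb R$; $\tau\downarrow Y$ deletes events with channel outside $Y$; a recorded trace $(h,\tau)$; $v\cdot(h,\tau)$ is the state $v$ with $v(h)$ replaced by $v(h)\cdot\tau$.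 $\tau\downarrow\gamma$ is projection onto the channels occurring in program $\gamma$. A program denotes a set $[\![\alpha]\!]$ of runs $(v,\tau,w)$, $v$ a state, $\tau$ a trace recorded by the program's recorder, $w$ a final state or $\bot$ (unfinished); for parallel composition, $[\![\alpha\parallel\beta]\!]=\{(v,\tau,w_\alpha\bowtie w_\beta):(v,\tau\downarrow\alpha,w_\alpha)\in[\![\alpha]\!],(v,\tau\downarrow\beta,w_\beta)\in[\![\beta]\!],w_\alpha=w_\beta\text{ on }\{\mu,\mu'\},\tau\downarrow(\alpha\parallel\beta)=\tau\}$, where $w_\alpha\bowtie w_\beta$ is $\bot$ if $w_\alpha=\bot$ or $w_\beta=\bot$, and otherwise equals $w_\alpha$ on $BV(\alpha)$ and $w_\beta$ elsewhere. (Other program constructs have the standard communicating-hybrid-program semantics: assignments, tests, ODEs, choice, prefix-closed sequential composition, iteration, and send/receive that append an event $\langle ch,\text{value},v(\mu)\rangle$.) $v\models\phi$ denotes satisfaction. Static semantics (formulas viewed as truth-valued). $FV(e)$: variables $z$ such that two states differing only on $z$ give $e$ different values. For $X\subseteq\mathrm{TVar}$, $v\downarrow_XY$ replaces $v(h)$ by $v(h)\downarrow Y$ for $h\in X$; $CN_X(e)$: channels $ch$ such that some $v,\tilde v$ with $v\downarrow_X(\mathbb N\setminus\{ch\})=\tilde v\downarrow_X(\mathbb N\setminus\{ch\})$ give $e$ different values. $BV(\alpha)$: variables $z$ with $(w\cdot\tau)(z)\ne v(z)$ for some $(v,\tau,w)\in[\![\alpha]\!]$, $w\ne\bot$. $CN(\alpha)$: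 channels $ch$ with $\tau\downarrow\{ch\}\ne\epsilon$ for some run of $\alpha$. *)

From Stdlib Require Import Reals List Arith.
Import ListNotations.
Open Scope R_scope.

Inductive rvar : Type := RBase (n : nat) | RDiff (n : nat).
Definition mu : rvar := RBase 0.
Definition mu' : rvar := RDiff 0.

Inductive var : Type := VR (x : rvar) | VT (h : nat).
Definition is_tvar (z : var) : Prop := match z with VT _ => True | VR _ => False end.

(** Events <ch, a, d> and traces. *)
Definition event : Type := (nat * R * R)%type.
Definition ev_ch (e : event) : nat := fst (fst e).
Definition trace : Type := list event.

Definition proj (tau : trace) (Y : nat -> bool) : trace :=
  filter (fun e => Y (ev_ch e)) tau.
Definition in_chans (L : list nat) (ch : nat) : bool := existsb (Nat.eqb ch) L.
Definition proj_on (tau : trace) (L : list nat) : trace := proj tau (in_chans L).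

Record state : Type := mkState { rst : rvar -> R ; tst : nat -> trace }.

Definition val_eq (v w : state) (z : var) : Prop :=
  match z with VR x => rst v x = rst w x | VT h => tst v h = tst w h end.
Definition state_eq (v w : state) : Prop :=
  (forall x, rst v x = rst w x) /\ (forall h, tst v h = tst w h).
Definition agree_except (v w : state) (z : var) : Prop :=
  forall z', z' <> z -> val_eq v w z'.

(** v . (h, tau) : v with v(h) replaced by v(h) . tau *)
Definition rec_app (v : state) (h : nat) (tau : trace) : state :=
  mkState (rst v) (fun h' => if Nat.eqb h' h then tst v h ++ tau else tst v h').
Definition rec_app_opt (v : state) (r : option nat) (tau : trace) : state :=
  match r with Some h => rec_app v h tau | None => v end.

Definition fml : Type := state -> Prop.

Definition FV (phi : fml) (z : var) : Prop :=
  exists v vt, agree_except v vt z /\ ~ (phi v <-> phi vt).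

Definition proj_state (X : nat -> bool) (Y : nat -> bool) (v : state) : state :=
  mkState (rst v) (fun h' => if X h' then proj (tst v h') Y else tst v h').

Definition CN_X (X : nat -> bool) (phi : fml) (ch : nat) : Prop :=
  exists v vt,
    state_eq (proj_state X (fun c => negb (Nat.eqb c ch)) v)
             (proj_state X (fun c => negb (Nat.eqb c ch)) vt)
    /\ ~ (phi v <-> phi vt).

(** Programs, given by their run semantics [[alpha]] (runs (v, tau, w), w = None
    meaning "unfinished" (bottom)), the (finite) set of channels occurring in the
    program, and its recorder (the unique trace variable it binds, if any).
    The fields below are properties enjoyed by every communicating hybrid program. *)
Record program : Type := {
  runs : state -> trace -> option state -> Prop;
  chans : list nat;
  recorder : option nat;
  chans_ok : forall v tau w e, runs v tau w -> In e tau -> In (ev_ch e) chans;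
  recorder_none : forall v tau w, recorder = None -> runs v tau w -> tau = [];
  tvars_fixed : forall v tau w, runs v tau (Some w) -> forall h, tst w h = tst v h;
  bound_finite : forall v tau w, runs v tau (Some w) ->
     exists L : list rvar, forall x, ~ In x L -> rst w x = rst v x
}.

Definition BV (a : program) (z : var) : Prop :=
  exists v tau w, runs a v tau (Some w) /\ ~ val_eq (rec_app_opt w (recorder a) tau) v z.

Definition CN (a : program) (ch : nat) : Prop :=
  exists v tau w, runs a v tau w /\ proj tau (fun c => Nat.eqb c ch) <> [].

Definition par_chans (a b : program) : list nat := chans a ++ chans b.

Definition is_join (a : program) (wa wb w : option state) : Prop :=
  match wa, wb with
  | Some sa, Some sb =>
      exists s, w = Some s /\ (forall z, BV a z -> val_eq s sa z)
                /\ (forall z, ~ BV a z -> val_eq s sb z)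
  | _, _ => w = None
  end.

Definition par_program (a b : program) (h : nat) : Prop :=
  (forall z, BV a z -> BV b z -> z = VR mu \/ z = VR mu' \/ is_tvar z)
  /\ (recorder a = Some h \/ recorder b = Some h)
  /\ (recorder a = None \/ recorder a = Some h)
  /\ (recorder b = None \/ recorder b = Some h).

Definition wf_acbox (a : program) (A C : fml) : Prop :=
  forall z, (FV A z \/ FV C z) -> (BV a z \/ z = VR mu \/ z = VR mu') -> is_tvar z.

Definition noninterf_one (a b : program) (h : nat) (chi : fml) : Prop :=
  (forall z, FV chi z -> BV b z -> z = VR mu \/ z = VR mu' \/ z = VT h)
  /\ (forall ch, CN_X (fun h' => Nat.eqb h' h) chi ch -> CN b ch -> CN a ch).

Definition noninterf (a b : program) (h : nat) (A C psi : fml) : Prop :=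
  noninterf_one a b h A /\ noninterf_one a b h C /\ noninterf_one a b h psi.

From Stdlib Require Import Reals List Bool Classical FunctionalExtensionality.

(** The traces [tau] and [tau |> alpha] differ only by events on channels of
    [beta] that are not channels of [alpha]; noninterference says
    that [A], [C] and [psi] cannot observe such channels on the recorder [h], so
    they may be dropped from the recorded trace one channel at a time. For (2),
    the final states [w] and [w_alpha] moreover differ only on the finitely many
    real variables that [beta] changes and [alpha] does not bind; [psi] reads
    none of them, except possibly [mu] and [mu'], on which the runs agree. *)

Lemma state_ext (u u' : state) :
  (forall x, rst u x = rst u' x) -> (forall k, tst u k = tst u' k) -> u = u'.
Proof.
  destruct u, u'; simpl; intros Hr Ht.
  f_equal; apply functional_extensionality; assumption.
Qed.

Lemma fml_agree_except (phi : fml) (u u' : state) (z : var) :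
  agree_except u u' z -> (FV phi z -> val_eq u u' z) -> (phi u <-> phi u').
Proof.
  intros Hagree Hz.
  destruct (classic (FV phi z)) as [Hfv | Hnfv].
  - assert (Hval : forall z', val_eq u u' z').
    { intro z'; destruct (classic (z' = z)) as [-> | Hne]; auto. }
    rewrite (state_ext u u'); [tauto | |].
    + intro x; exact (Hval (VR x)).
    + intro k; exact (Hval (VT k)).
  - apply NNPP; intro Hdiff; apply Hnfv.
    exists u, u'; split; assumption.
Qed.

Lemma rvar_eq_dec (x y : rvar) : {x = y} + {x <> y}.
Proof. decide equality; apply Nat.eq_dec. Qed.

Definition set_rvar (u : state) (x : rvar) (r : R) : state :=
  mkState (fun y => if rvar_eq_dec y x then r else rst u y) (tst u).

Lemma fml_agree_off_rvars (phi : fml) (L : list rvar) (u u' : state) :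
  (forall k, tst u k = tst u' k) ->
  (forall x, ~ In x L -> rst u x = rst u' x) ->
  (forall x, FV phi (VR x) -> rst u x = rst u' x) ->
  (phi u <-> phi u').
Proof.
  revert u; induction L as [|x L IH]; intros u Ht Hoff Hfv.
  - rewrite (state_ext u u'); [tauto | | exact Ht].
    intro x; apply Hoff; simpl; tauto.
  - transitivity (phi (set_rvar u x (rst u' x))).
    + apply fml_agree_except with (z := VR x).
      * intros [y | k] Hne; simpl; [| reflexivity].
        destruct (rvar_eq_dec y x) as [-> | _]; [congruence | reflexivity].
      * intro Hx; simpl; destruct (rvar_eq_dec x x) as [_ | []]; auto.
    + apply IH; simpl; [exact Ht | |].
      * intros y Hy; destruct (rvar_eq_dec y x) as [-> | Hne]; [reflexivity |].
        apply Hoff; simpl; intros [E | E]; [congruence | contradiction].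
      * intros y Hy; destruct (rvar_eq_dec y x) as [-> |]; auto.
Qed.

Lemma in_proj (e : event) (t : trace) (P : nat -> bool) :
  In e (proj t P) <-> In e t /\ P (ev_ch e) = true.
Proof. apply filter_In. Qed.

Lemma in_chans_iff (L : list nat) (c : nat) : in_chans L c = true <-> In c L.
Proof.
  unfold in_chans; rewrite existsb_exists; split.
  - intros (d & Hd & E); apply Nat.eqb_eq in E; subst; exact Hd.
  - intro Hc; exists c; split; [exact Hc | apply Nat.eqb_refl].
Qed.

Lemma in_proj_on (e : event) (t : trace) (L : list nat) :
  In e (proj_on t L) <-> In e t /\ In (ev_ch e) L.
Proof. unfold proj_on; rewrite in_proj, in_chans_iff; reflexivity. Qed.

Lemma proj_app (t1 t2 : trace) (P : nat -> bool) :
  proj (t1 ++ t2) P = proj t1 P ++ proj t2 P.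
Proof. apply filter_app. Qed.

Lemma proj_proj (t : trace) (P Q : nat -> bool) :
  proj (proj t P) Q = proj t (fun c => P c && Q c).
Proof.
  unfold proj; induction t as [|e t IH]; simpl; [reflexivity |].
  destruct (P (ev_ch e)); simpl; destruct (Q (ev_ch e)); simpl; rewrite ?IH; reflexivity.
Qed.

Lemma proj_idem (t : trace) (P : nat -> bool) : proj (proj t P) P = proj t P.
Proof.
  rewrite proj_proj; apply filter_ext; intro e; destruct (P (ev_ch e)); reflexivity.
Qed.

Lemma proj_comm (t : trace) (P Q : nat -> bool) :
  proj (proj t P) Q = proj (proj t Q) P.
Proof.
  rewrite !proj_proj; apply filter_ext; intro e; apply andb_comm.
Qed.

Lemma proj_id (t : trace) (P : nat -> bool) :
  (forall e, In e t -> P (ev_ch e) = true) -> proj t P = t.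
Proof.
  unfold proj; induction t as [|e t IH]; intro HP; simpl; [reflexivity |].
  rewrite HP by (left; reflexivity); f_equal.
  apply IH; intros e' He'; apply HP; right; exact He'.
Qed.

Lemma rec_app_drop_chan (phi : fml) (h : nat) (u : state) (t : trace) (c : nat) :
  ~ CN_X (fun k => Nat.eqb k h) phi c ->
  (phi (rec_app u h (proj t (fun d => negb (Nat.eqb d c)))) <-> phi (rec_app u h t)).
Proof.
  intro Hc; apply NNPP; intro Hdiff; apply Hc.
  eexists; eexists; split; [| exact Hdiff].
  split; intro k; simpl; [reflexivity |].
  destruct (Nat.eqb k h); [| reflexivity].
  rewrite !proj_app, proj_idem; reflexivity.
Qed.

Lemma rec_app_proj_chans (phi : fml) (h : nat) (u : state) (L : list nat) :
  forall (t : trace) (Y : nat -> bool),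
  (forall e, In e t -> Y (ev_ch e) = false -> In (ev_ch e) L) ->
  (forall c, In c L -> ~ CN_X (fun k => Nat.eqb k h) phi c) ->
  (phi (rec_app u h (proj t Y)) <-> phi (rec_app u h t)).
Proof.
  induction L as [|c L IH]; intros t Y Hcover Hcn.
  - rewrite proj_id; [tauto |].
    intros e He; destruct (Y (ev_ch e)) eqn:E; [reflexivity |].
    destruct (Hcover e He E).
  - rewrite <- (rec_app_drop_chan phi h u t c), <- (rec_app_drop_chan phi h u (proj t Y) c)
      by (apply Hcn; left; reflexivity).
    rewrite proj_comm; apply IH.
    + intros e He HY; apply in_proj in He as [He Hne].
      destruct (Hcover e He HY) as [-> | HL]; [| exact HL].
      rewrite Nat.eqb_refl in Hne; discriminate.
    + intros d Hd; apply Hcn; right; exact Hd.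
Qed.

Lemma rec_app_proj_invariant (phi : fml) (h : nat) (u : state) (t : trace)
  (Y : nat -> bool) :
  (forall e, In e t -> Y (ev_ch e) = false ->
     ~ CN_X (fun k => Nat.eqb k h) phi (ev_ch e)) ->
  (phi (rec_app u h (proj t Y)) <-> phi (rec_app u h t)).
Proof.
  intro Hcn.
  apply (rec_app_proj_chans phi h u (map ev_ch (proj t (fun c => negb (Y c))))).
  - intros e He HY; apply in_map, in_proj; rewrite HY; auto.
  - intros c Hc; apply in_map_iff in Hc as (e & <- & He).
    apply in_proj in He as [He HY]; apply Hcn; [exact He |].
    destruct (Y (ev_ch e)); [discriminate | reflexivity].
Qed.

Lemma CN_in_chans (a : program) (c : nat) : CN a c -> In c (chans a).
Proof.
  intros (v & t & w & Hrun & Hne).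
  destruct (proj t (fun d => Nat.eqb d c)) as [|e l] eqn:E; [contradiction |].
  assert (He : In e (proj t (fun d => Nat.eqb d c))) by (rewrite E; left; reflexivity).
  apply in_proj in He as [He Hc]; apply Nat.eqb_eq in Hc; subst c.
  exact (chans_ok a _ _ _ _ Hrun He).
Qed.

Lemma CN_of_run_event (a : program) (v : state) (t : trace) (w : option state)
  (e : event) :
  runs a v t w -> In e t -> CN a (ev_ch e).
Proof.
  intros Hrun He; exists v, t, w; split; [exact Hrun |]; intro E.
  assert (He' : In e (proj t (fun d => Nat.eqb d (ev_ch e)))).
  { apply in_proj; split; [exact He | apply Nat.eqb_refl]. }
  rewrite E in He'; destruct He'.
Qed.

Lemma noninterf_rec_app_proj_on (alpha beta : program) (h : nat) (phi : fml)
  (v : state) (tau : trace) (wb : option state) (u : state) :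
  noninterf_one alpha beta h phi ->
  runs beta v (proj_on tau (chans beta)) wb ->
  proj_on tau (par_chans alpha beta) = tau ->
  (phi (rec_app u h (proj_on tau (chans alpha))) <-> phi (rec_app u h tau)).
Proof.
  intros [_ Hcn] Hb Htau; apply rec_app_proj_invariant.
  intros e He Hna HX.
  assert (Hna' : ~ In (ev_ch e) (chans alpha)).
  { rewrite <- in_chans_iff, Hna; discriminate. }
  apply Hna', CN_in_chans, Hcn; [exact HX |].
  apply (CN_of_run_event _ _ _ _ _ Hb), in_proj_on; split; [exact He |].
  rewrite <- Htau in He; apply in_proj_on in He as [_ Hpar].
  apply in_app_or in Hpar as [Ha | Hb']; tauto.
Qed.

Lemma rst_notin_BV (a : program) (v : state) (t : trace) (w : state) (x : rvar) :
  runs a v t (Some w) -> ~ BV a (VR x) -> rst w x = rst v x.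
Proof.
  intros Hrun Hx; apply NNPP; intro Hne; apply Hx.
  exists v, t, w; split; [exact Hrun |].
  simpl; destruct (recorder a); exact Hne.
Qed.

Section Join.

Variables (alpha beta : program) (v : state) (ta tb : trace) (sa sb s : state).
Hypothesis (Ha : runs alpha v ta (Some sa)) (Hb : runs beta v tb (Some sb))
  (Hj : is_join alpha (Some sa) (Some sb) (Some s)).

Lemma join_tst (k : nat) : tst s k = tst sa k.
Proof.
  destruct Hj as (s0 & E & HBV & HnBV); injection E as <-.
  rewrite (tvars_fixed _ _ _ _ Ha).
  destruct (classic (BV alpha (VT k))) as [B | B].
  - rewrite (HBV _ B); exact (tvars_fixed _ _ _ _ Ha k).
  - rewrite (HnBV _ B); exact (tvars_fixed _ _ _ _ Hb k).
Qed.

Lemma join_rst_changed (x : rvar) :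
  rst s x <> rst sa x -> rst sb x <> rst v x.
Proof.
  destruct Hj as (s0 & E & HBV & HnBV); injection E as <-.
  intro Hne; destruct (classic (BV alpha (VR x))) as [B | B].
  - destruct (Hne (HBV _ B)).
  - rewrite <- (HnBV _ B), <- (rst_notin_BV _ _ _ _ _ Ha B); exact Hne.
Qed.

Lemma noninterf_join_invariant (h : nat) (psi : fml) (t : trace) :
  noninterf_one alpha beta h psi ->
  rst s mu = rst sa mu -> rst s mu' = rst sa mu' ->
  (psi (rec_app sa h t) <-> psi (rec_app s h t)).
Proof.
  intros [Hfv _] Hmu Hmu'.
  destruct (bound_finite _ _ _ _ Hb) as [L HL].
  apply (fml_agree_off_rvars psi L); simpl.
  - intro k; destruct (Nat.eqb k h); rewrite !join_tst; reflexivity.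
  - intros x Hx; apply NNPP; intro Hne.
    apply (join_rst_changed x); [congruence | exact (HL x Hx)].
  - intros x Hx; apply NNPP; intro Hne.
    assert (HB : BV beta (VR x)).
    { apply NNPP; intro B; apply (join_rst_changed x); [congruence |].
      exact (rst_notin_BV _ _ _ _ _ Hb B). }
    destruct (Hfv _ Hx HB) as [E | [E | E]]; try injection E as ->; congruence.
Qed.

End Join.

Theorem lemmaA1 (alpha beta : program) (h : nat) (A C psi : fml)
  (v : state) (tau : trace) (wa wb w : option state) :
  wf_acbox alpha A C ->
  par_program alpha beta h ->
  noninterf alpha beta h A C psi ->
  runs alpha v (proj_on tau (chans alpha)) wa ->
  runs beta v (proj_on tau (chans beta)) wb ->
  is_join alpha wa wb w ->
  (forall s sa sb, w = Some s -> wa = Some sa -> wb = Some sb ->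
     rst s mu = rst sa mu /\ rst sa mu = rst sb mu /\
     rst s mu' = rst sa mu' /\ rst sa mu' = rst sb mu') ->
  proj_on tau (par_chans alpha beta) = tau ->
  (forall lam : fml, (lam = A \/ lam = C) ->
     (lam (rec_app v h (proj_on tau (chans alpha))) <-> lam (rec_app v h tau)))
  /\
  (forall s sa, w = Some s -> wa = Some sa ->
     (psi (rec_app sa h (proj_on tau (chans alpha))) <-> psi (rec_app s h tau))).
Proof.
  intros _ _ (HA & HC & Hpsi) Ha Hb Hj Hmu Htau; split.
  - intros lam [-> | ->]; eapply noninterf_rec_app_proj_on; eauto.
  - intros s sa -> ->.
    destruct wb as [sb |]; [| discriminate Hj].
    destruct (Hmu s sa sb) as (Hmu0 & _ & Hmu1 & _); try reflexivity.
    rewrite (noninterf_rec_app_proj_on alpha beta h psi v tau (Some sb)) by assumption.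
    eapply noninterf_join_invariant; eassumption.
Qed.
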